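(* Let $\Omega\subset\mathbb{R}^d$ be a bounded domain and $k\ge1$. Suppose $f:\mathbb{R}^d\to\mathbb{R}$ can be represented by an MLP with width $W\ge1$, depth $L\ge1$ and activation function $\sigma_k(x)=\max(0,x)^k$. Then there exists a KAN $g$ with width $W$, depth at most $2L$, and grid size $G=2$ with $k$-th order B-spline functions such that $g(\mathbf{x})=f(\mathbf{x})$ for all $\mathbf{x}\in\Omega$.
   Context: An MLP of depth $L$ and width $W$ with activation $\sigma_k$ is a map $f=A_L\circ\sigma_k\circ A_{L-1}\circ\cdots\circ\sigma_k\circ A_1$, where the $A_l$ are affine maps, all intermediate (hidden) dimensions are at most $W$, and $\sigma_k$ is applied coordinatewise. A KAN of depth $D$ is a composition $\Phi_{D-1}\circ\cdots\circ\Phi_0$ of KAN layers, where a KAN layer from $\mathbb{R}^{m}$ to $\mathbb{R}^{m'}$ is a matrix of univariate functions $\{\phi_{j,i}\}$ acting by $(\Phi\mathbf{x})_j=\sum_{i=1}^{m}\phi_{j,i}(x_i)$; its width is the maximal hidden-layer dimension. Each univariate function has the form $\phi(x)=w_b\,\mathrm{silu}(x)+w_s\sum_i c_iB_i(x)$ with $\mathrm{silu}(x)=x/(1+e^{-x})$, real coefficients $w_b,w_s,c_i$, and $B_i$ the degree-$k$ B-splines on the knot sequence obtained from a uniform partition of an interval $[-R,R]$ into $G$ intervals extended uniformly by $k$ knots on each side (''grid size $G$ with $k$-th order B-splines''). *)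

From HB Require Import structures.
From mathcomp Require Import all_boot all_order all_algebra.
From mathcomp Require Import all_classical all_reals all_analysis.
Set Implicit Arguments. Unset Strict Implicit. Unset Printing Implicit Defensive.
Import Order.TTheory GRing.Theory Num.Theory.
Local Open Scope ring_scope.

Section Nets.
Variable R : realType.

Definition sigmak (k : nat) (x : R) : R := (Num.max 0 x) ^+ k.

Definition affine (m n : nat) (A : 'M[R]_(m, n)) (b : 'rV[R]_n) (x : 'rV[R]_m)
  : 'rV[R]_n := x *m A + b.

Inductive mlp : nat -> nat -> Type :=
| MLast : forall m n, 'M[R]_(m, n) -> 'rV[R]_n -> mlp m n
| MCons : forall m h n, 'M[R]_(m, h) -> 'rV[R]_h -> mlp h n -> mlp m n.

Fixpoint mlp_eval (k : nat) (m n : nat) (N : mlp m n) : 'rV[R]_m -> 'rV[R]_n :=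
  match N in mlp m n return 'rV[R]_m -> 'rV[R]_n with
  | MLast _ _ A b => fun x => affine A b x
  | MCons _ _ _ A b N' => fun x => mlp_eval k N' (map_mx (sigmak k) (affine A b x))
  end.

Fixpoint mlp_depth (m n : nat) (N : mlp m n) : nat :=
  match N with
  | MLast _ _ _ _ => 1
  | MCons _ _ _ _ _ N' => (mlp_depth N').+1
  end.

Fixpoint mlp_width (m n : nat) (N : mlp m n) : nat :=
  match N with
  | MLast _ _ _ _ => 0
  | MCons _ h _ _ _ N' => maxn h (mlp_width N')
  end.

(** knots t_j, j = 0 .. G+2k, of the uniform partition of [-Rg,Rg] into G
    intervals, extended uniformly by k knots on each side:
    t_j = -Rg + (j - k) * (2 Rg / G). *)
Definition knot (Rg : R) (G k : nat) (j : nat) : R :=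
  - Rg + ((j%:R - k%:R) * (2 * Rg / G%:R)).

(** Cox-de Boor recursion: bspl t p i = B_{i,p} on knots t. *)
Fixpoint bspl (t : nat -> R) (p i : nat) (x : R) : R :=
  match p with
  | 0 => if (t i <= x) && (x < t i.+1) then 1 else 0
  | p'.+1 => (x - t i) / (t (i + p) - t i) * bspl t p' i x
             + (t (i + p).+1 - x) / (t (i + p).+1 - t i.+1) * bspl t p' i.+1 x
  end.

Definition bspline (Rg : R) (G k : nat) (i : 'I_(G + k)) (x : R) : R :=
  bspl (knot Rg G k) k i x.

Definition silu (x : R) : R := x / (1 + expR (- x)).

Record uparam (G k : nat) := UParam {
  wb : R; ws : R; coef : 'I_(G + k) -> R }.

Definition phi_eval (Rg : R) (G k : nat) (P : uparam G k) (x : R) : R :=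
  wb P * silu x + ws P * \sum_(i < G + k) coef P i * @bspline Rg G k i x.

Definition kan_layer (G k m m' : nat) := 'I_m' -> 'I_m -> uparam G k.

Definition layer_eval (Rg : R) (G k m m' : nat) (Phi : kan_layer G k m m')
  (x : 'rV[R]_m) : 'rV[R]_m' :=
  \row_(j < m') \sum_(i < m) phi_eval Rg (Phi j i) (x 0 i).

Inductive kan (G k : nat) : nat -> nat -> Type :=
| KLast : forall m n, kan_layer G k m n -> kan G k m n
| KCons : forall m h n, kan_layer G k m h -> kan G k h n -> kan G k m n.

Fixpoint kan_eval (Rg : R) (G k : nat) (m n : nat) (N : kan G k m n)
  : 'rV[R]_m -> 'rV[R]_n :=
  match N in kan _ _ m n return 'rV[R]_m -> 'rV[R]_n with
  | KLast _ _ Phi => fun x => layer_eval Rg Phi x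
  | KCons _ _ _ Phi N' => fun x => kan_eval Rg N' (layer_eval Rg Phi x)
  end.

Fixpoint kan_depth (G k m n : nat) (N : kan G k m n) : nat :=
  match N with
  | KLast _ _ _ => 1
  | KCons _ _ _ _ N' => (kan_depth N').+1
  end.

Fixpoint kan_width (G k m n : nat) (N : kan G k m n) : nat :=
  match N with
  | KLast _ _ _ => 0
  | KCons _ h _ _ N' => maxn h (kan_width N')
  end.

End Nets.

(* On the grid of size 2 over [-Rg, Rg] extended by k knots on each side, the
   knots are t_j = (j - k - 1) Rg, so t_(k+1) = 0 and t_(k+2) = Rg.  Degree-k
   B-splines on a uniform grid form a partition of unity and reproduce linear
   functions (Marsden's identity with the Greville abscissae t_i + (k+1)h/2),
   so any affine function is a spline on [t_k, t_(k+2)) = [-Rg, Rg).  Moreover,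
   left of t_(k+2) the B-spline B_(k+1) is the truncated power
   max(0, x)^k / (k! Rg^k), i.e. a multiple of sigma_k.  Hence each hidden layer
   sigma_k o A of the MLP becomes two KAN layers, an affine one and a diagonal
   activation one, valid as soon as Rg exceeds a bound on all intermediate
   values, which exists because Omega is bounded. *)
From HB Require Import structures.
From mathcomp Require Import all_boot all_order all_algebra.
From mathcomp Require Import all_classical all_reals all_analysis.
From mathcomp Require Import ring lra zify.
Set Implicit Arguments. Unset Strict Implicit. Unset Printing Implicit Defensive.
Import Order.TTheory GRing.Theory Num.Theory.
Import numFieldNormedType.Exports.
Local Open Scope classical_set_scope.
Local Open Scope ring_scope.

Section UniformBsplines.
Variable R : realType.
Variables (t : nat -> R) (t0 h : R).
Hypothesis tE : forall j, t j = t0 + j%:R * h.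
Hypothesis h_gt0 : 0 < h.

Let h_neq0 : h != 0. Proof. by rewrite gt_eqF. Qed.

Lemma grid_le i j : (i <= j)%N -> t i <= t j.
Proof. by move=> ij; rewrite !tE lerD2l; apply: ler_wpM2r; [exact: ltW | rewrite ler_nat]. Qed.

Lemma grid_ltn i j : t i < t j -> (i < j)%N.
Proof. by move=> tij; rewrite ltnNge; apply/negP => /grid_le; rewrite leNgt tij. Qed.

Lemma bspl_eq0_left p i x : x < t i -> bspl t p i x = 0.
Proof.
elim: p i => [|q IH] i hx /=; first by rewrite leNgt hx.
rewrite IH // IH ?mulr0 ?addr0 //; apply: lt_le_trans hx _; apply: grid_le; lia.
Qed.

Lemma bspl_eq0_right p i x : t (i + p).+1 <= x -> bspl t p i x = 0.
Proof.
elim: p i => [|q IH] i hx /=; first by rewrite addn0 in hx; rewrite ltNge hx andbF.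
rewrite IH; last by apply: le_trans hx; apply: grid_le; lia.
by rewrite IH -?addnS ?addSn // !mulr0 addr0.
Qed.

Lemma bspl_truncated_power p i x : x < t i.+1 ->
  bspl t p i x = if t i <= x then (x - t i) ^+ p / (p`!%:R * h ^+ p) else 0.
Proof.
elim: p i => [|q IH] i hx /=.
  by rewrite hx andbT; case: ifP; rewrite ?expr0 ?fact0 ?mulr1 ?divr1.
rewrite (bspl_eq0_left _ hx) mulr0 addr0 IH //.
case: ifP => _; last by rewrite mulr0.
have -> : t (i + q.+1) - t i = q.+1%:R * h by rewrite !tE natrD; ring.
rewrite factS natrM !exprS.
have : q`!%:R != 0 :> R by rewrite pnatr_eq0 -lt0n fact_gt0.
have : q.+1%:R != 0 :> R by rewrite pnatr_eq0.
move: (q.+1%:R) (q`!%:R) => a F a_neq0 F_neq0.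
by field; rewrite expf_neq0 // h_neq0 a_neq0 F_neq0.
Qed.

Lemma bspl_succE q i x : bspl t q.+1 i x =
  (x - t i) / (q.+1%:R * h) * bspl t q i x
  + (1 - (x - t i.+1) / (q.+1%:R * h)) * bspl t q i.+1 x.
Proof.
have Sq_neq0 : 1 + q%:R != 0 :> R by rewrite nat1r pnatr_eq0.
have tS : t (i + q.+1).+1 = t i.+1 + q.+1%:R * h.
  by rewrite !tE -addn1 -(addn1 i) !natrD; ring.
rewrite [LHS]/=.
have -> : t (i + q.+1) - t i = q.+1%:R * h by rewrite !tE natrD; ring.
rewrite tS (addrC (t i.+1)) addrK.
by congr (_ + _ * _); field; rewrite h_neq0 Sq_neq0.
Qed.

(* The hypotheses put x away from the two boundary B-splines, whose terms vanish. *)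
Lemma sum_bspl_succ q m n x (c : nat -> R) : t (m + q).+1 <= x -> x < t n ->
  \sum_(m <= i < n) c i * bspl t q.+1 i x =
  \sum_(m.+1 <= i < n) (c i * ((x - t i) / (q.+1%:R * h))
       + c i.-1 * (1 - (x - t i) / (q.+1%:R * h))) * bspl t q i x.
Proof.
move=> xl xr; have mqn := grid_ltn (le_lt_trans xl xr).
case: n xr mqn => [//|n] xr mqn; have mn : (m <= n)%N by lia.
under eq_bigr do rewrite bspl_succE mulrDr.
rewrite big_split /= big_nat_recl // (@bspl_eq0_right q m) // !mulr0 add0r.
rewrite (big_nat_recr _ _ _ mn) /= (@bspl_eq0_left q n.+1) // !mulr0 addr0.
rewrite big_add1 -big_split /=.
by apply: eq_bigr => i _; ring.
Qed.

Lemma sum_bspl0 m n x : t m <= x -> x < t n ->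
  \sum_(m <= i < n) bspl t 0 i x = 1.
Proof.
move=> xl; elim: n => [|n IH] xr.
  by have := lt_le_trans (le_lt_trans xl xr) (grid_le (leq0n m)); rewrite ltxx.
have mn : (m <= n)%N by have := grid_ltn (le_lt_trans xl xr); lia.
rewrite (big_nat_recr _ _ _ mn) /=.
have [xn|nx] := ltP x (t n); first by rewrite IH // addr0.
rewrite xr /= big_nat_cond big1 ?add0r // => i /andP[/andP[_ ni] _].
by rewrite ltNge (le_trans (grid_le ni) nx) andbF.
Qed.

Lemma sum_bspl_eq1 p m n x : t (m + p) <= x -> x < t n ->
  \sum_(m <= i < n) bspl t p i x = 1.
Proof.
elim: p m => [|q IH] m xl xr; first by apply: sum_bspl0; rewrite // -(addn0 m).
under eq_bigr do rewrite -[bspl _ _ _ _]mul1r.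
rewrite (sum_bspl_succ (fun=> 1)) -?addnS //.
under eq_bigr do rewrite !mul1r subrKC mul1r.
by apply: IH; rewrite // addSn -addnS.
Qed.

Lemma sum_bspl_greville p m n x : (0 < p)%N -> t (m + p) <= x -> x < t n ->
  \sum_(m <= i < n) (t i + p.+1%:R * h / 2) * bspl t p i x = x.
Proof.
elim: p m => [//|q IH] m _ xl xr.
have xl' : t (m.+1 + q) <= x by rewrite addSn -addnS.
have Sq_neq0 : q.+1%:R != 0 :> R by rewrite pnatr_eq0.
apply: (mulfI Sq_neq0).
rewrite (sum_bspl_succ (fun i => t i + q.+2%:R * h / 2)) -?addnS // mulr_sumr.
transitivity (\sum_(m.+1 <= i < n)
    (q%:R * ((t i + q.+1%:R * h / 2) * bspl t q i x) + x * bspl t q i x)).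
  rewrite big_nat_cond [RHS]big_nat_cond; apply: eq_bigr => i /andP[/andP[mi _] _].
  have tP : t i.-1 = t i - h.
    by case: i mi => // i _; rewrite /= !tE -natr1; ring.
  rewrite tP !mulrA -mulrDl; congr (_ * _).
  rewrite -!natr1 -addrA (_ : 1 + 1 = 2) //.
  have : q%:R + 1 != 0 :> R by rewrite natr1 pnatr_eq0.
  move: (q%:R) => a a1_neq0.
  by field; rewrite h_neq0 a1_neq0.
rewrite big_split /= -!mulr_sumr sum_bspl_eq1 // mulr1.
have -> : q%:R * \sum_(m.+1 <= i < n) (t i + q.+1%:R * h / 2) * bspl t q i x
    = q%:R * x.
  by case: q {Sq_neq0 xl} IH xl' => [|q] IH xl'; rewrite ?mul0r // IH.
by rewrite -natr1 mulrDl mul1r.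
Qed.

End UniformBsplines.

Section GridOfSize2.
Variables (R : realType) (Rg : R) (k : nat).
Hypotheses (Rg_gt0 : 0 < Rg) (k_gt0 : (0 < k)%N).

Lemma knot2E j : knot Rg 2 k j = (- Rg - k%:R * Rg) + j%:R * Rg.
Proof. by rewrite /knot; field. Qed.

Lemma knot2_lo : knot Rg 2 k (0 + k) = - Rg.
Proof. by rewrite knot2E add0n; ring. Qed.

Lemma knot2_hi : knot Rg 2 k (2 + k) = Rg.
Proof. by rewrite knot2E natrD; ring. Qed.

Lemma knot2_mid : knot Rg 2 k k.+1 = 0.
Proof. by rewrite knot2E -natr1; ring. Qed.

Definition uparam_affine (a c : R) : uparam R 2 k :=
  UParam 0 1 (fun i : 'I_(2 + k) => a * (knot Rg 2 k i + k.+1%:R * Rg / 2) + c).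

Definition uparam_sigma : uparam R 2 k :=
  UParam 0 1 (fun i : 'I_(2 + k) => if val i == k.+1 then k`!%:R * Rg ^+ k else 0).

Definition uparam0 : uparam R 2 k := UParam 0 0 (fun=> 0).

Lemma phi_eval0 x : phi_eval Rg uparam0 x = 0.
Proof. by rewrite /phi_eval /= !mul0r addr0. Qed.

Lemma phi_eval_affine a c x : - Rg <= x -> x < Rg ->
  phi_eval Rg (uparam_affine a c) x = a * x + c.
Proof.
move=> xl xr; rewrite /phi_eval /= mul0r add0r mul1r /bspline.
rewrite -knot2_lo in xl; rewrite -knot2_hi in xr.
under eq_bigr do rewrite mulrDl -mulrA.
rewrite big_split /= -!mulr_sumr.
rewrite -(big_mkord xpredT (fun i => bspl (knot Rg 2 k) k i x)).
rewrite -(big_mkord xpredT (fun i =>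
  (knot Rg 2 k i + k.+1%:R * Rg / 2) * bspl (knot Rg 2 k) k i x)).
by rewrite (sum_bspl_eq1 knot2E) // (sum_bspl_greville knot2E) // mulr1.
Qed.

Lemma phi_eval_sigma x : x < Rg -> phi_eval Rg uparam_sigma x = sigmak k x.
Proof.
move=> xr; rewrite /phi_eval /= mul0r add0r mul1r.
have Sk_lt : (k.+1 < 2 + k)%N by lia.
rewrite (bigD1 (Ordinal Sk_lt)) //= eqxx big1 ?addr0; last first.
  by move=> i /negbTE; rewrite -val_eqE /= => ->; rewrite mul0r.
rewrite /bspline /= (bspl_truncated_power knot2E) //; last first.
  by rewrite knot2E -!natr1; lra.
rewrite knot2_mid subr0 /sigmak.
have [x_ge0|x_lt0] := leP 0 x.
  by field; rewrite expf_neq0 ?gt_eqF // pnatr_eq0 -lt0n fact_gt0.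
by rewrite mulr0 expr0n gtn_eqF.
Qed.

End GridOfSize2.

Section KanLayers.
Variables (R : realType) (Rg : R) (k : nat).
Hypotheses (Rg_gt0 : 0 < Rg) (k_gt0 : (0 < k)%N).

(* The bias is carried by the univariate functions reading input coordinate 0. *)
Definition affine_layer m n (A : 'M[R]_(m, n)) (b : 'rV[R]_n) : kan_layer R 2 k m n :=
  fun j i => uparam_affine Rg k (A i j) (if val i == 0%N then b 0 j else 0).

Definition sigma_layer n : kan_layer R 2 k n n :=
  fun j i => if i == j then uparam_sigma Rg k else uparam0 R k.

Definition zero_layer m n : kan_layer R 2 k m n := fun _ _ => uparam0 R k.

Definition const_layer n (c : 'rV[R]_n) : kan_layer R 2 k 1 n :=
  fun j _ => uparam_affine Rg k 0 (c 0 j).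

Lemma affine_layerE m n (A : 'M[R]_(m, n)) b (x : 'rV[R]_m) : (0 < m)%N ->
  (forall i, `|x 0 i| < Rg) ->
  layer_eval Rg (affine_layer A b) x = affine A b x.
Proof.
case: m A x => // m A x _ x_in; apply/rowP => j; rewrite !mxE.
under eq_bigr => i _.
  have /andP[xl xr] : - Rg < x 0 i < Rg by rewrite -ltr_norml.
  rewrite phi_eval_affine ?ltW // mulrC.
  over.
rewrite big_split /=; congr (_ + _).
by rewrite big_ord_recl /= big1 ?addr0.
Qed.

Lemma sigma_layerE n (x : 'rV[R]_n) : (forall i, x 0 i < Rg) ->
  layer_eval Rg (@sigma_layer n) x = map_mx (sigmak k) x.
Proof.
move=> x_lt; apply/rowP => j; rewrite !mxE (bigD1 j) //= /sigma_layer eqxx.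
by rewrite phi_eval_sigma // big1 ?addr0 // => i /negbTE ->; rewrite phi_eval0.
Qed.

Lemma const_kan m n (c : 'rV[R]_n) : exists K : kan R 2 k m n,
  [/\ kan_depth K = 2%N, kan_width K = 1%N & forall x, kan_eval Rg K x = c].
Proof.
exists (KCons (@zero_layer m 1) (KLast (const_layer c))); split=> // x /=.
have -> : layer_eval Rg (@zero_layer m 1) x = 0.
  by apply/rowP => i; rewrite !mxE big1 // => ? _; rewrite phi_eval0.
apply/rowP => j; rewrite !mxE big_ord1 mxE phi_eval_affine ?mul0r ?add0r //.
by rewrite oppr_le0 ltW.
Qed.

End KanLayers.

Lemma sigmak_norm_le (R : realType) k (y C : R) : `|y| <= C -> `|sigmak k y| <= C ^+ k.
Proof.
move=> yC; have max_le : `|Num.max 0 y| <= C.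
  by apply: le_trans yC; rewrite /Num.max; case: ifP => _; rewrite ?normr0 ?normr_ge0.
by rewrite /sigmak normrX lerXn2r ?nnegrE ?(le_trans (normr_ge0 _) max_le).
Qed.

Lemma affine_norm_le (R : realType) m n (A : 'M[R]_(m, n)) (b : 'rV[R]_n) (B : R)
  (x : 'rV[R]_m) : (forall i, `|x 0 i| <= B) ->
  forall j, `|affine A b x 0 j| <= \sum_j' (\sum_i `|A i j'| * `|B| + `|b 0 j'|).
Proof.
move=> xB j; apply: (@le_trans _ _ (\sum_i `|A i j| * `|B| + `|b 0 j|)).
  rewrite /affine !mxE (le_trans (ler_normD _ _)) // lerD2r.
  rewrite (le_trans (ler_norm_sum _ _ _)) // ler_sum // => i _.
  by rewrite normrM mulrC ler_wpM2l // (le_trans (xB i)) ?ler_norm.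
rewrite (bigD1 j) //= lerDl sumr_ge0 // => j' _.
by rewrite addr_ge0 // sumr_ge0 // => i _; rewrite mulr_ge0.
Qed.

Lemma mlp_depth_gt0 (R : realType) m n (N : mlp R m n) : (0 < mlp_depth N)%N.
Proof. by case: N. Qed.

Lemma bounded_set_coord (R : realType) d (Omega : set 'rV[R]_d) : bounded_set Omega ->
  exists B : R, forall x, Omega x -> forall i, `|x 0 i| <= B.
Proof.
case=> M [_ OmegaM]; exists (M + 1) => x Ox i.
have M_lt : M < M + 1 by rewrite ltrDl.
have /= := OmegaM (M + 1) M_lt x Ox; apply: le_trans.
by rewrite [X in _ <= X]mx_normrE (le_bigmax _ (fun ij => `|x ij.1 ij.2|) (0, i)).
Qed.

Section MlpToKan.
Variables (R : realType) (k : nat).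
Hypothesis k_gt0 : (0 < k)%N.

(* A hidden layer of dimension 0 makes the rest of the network constant. *)
Lemma mlp_kan_on_box m n (N : mlp R m n) : (0 < m)%N -> forall B : R,
  exists R0 : R, 0 <= R0 /\ forall Rg, R0 < Rg -> exists K : kan R 2 k m n,
  [/\ ((kan_depth K).+1 <= 2 * mlp_depth N)%N,
      (kan_width K <= maxn (mlp_width N) 1)%N &
      forall x : 'rV[R]_m, (forall i, `|x 0 i| <= B) -> kan_eval Rg K x = mlp_eval k N x].
Proof.
elim: N => [m0 n0 A b | m0 [|h] n0 A b N' IH] m_gt0 B.
- exists `|B|; split=> // Rg BRg; have Rg_gt0 := le_lt_trans (normr_ge0 B) BRg.
  exists (KLast (affine_layer Rg k A b)); split=> // x xB /=.
  apply: affine_layerE => // i.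
  by rewrite (le_lt_trans (xB i)) // (le_lt_trans (ler_norm B)).
- exists 0; split=> // Rg Rg_gt0.
  have [K [Kd Kw KE]] := const_kan Rg_gt0 k_gt0 m0 (mlp_eval k N' 0).
  exists K; split=> [||x _ /=]; rewrite ?Kd ?Kw /=; first by have := mlp_depth_gt0 N'; lia.
  + by rewrite leq_maxr.
  + by rewrite KE (thinmx0 (map_mx _ _)).
set B' := \sum_j (\sum_i `|A i j| * `|B| + `|b 0 j|).
have [R1 [R1_ge0 IHR1]] := IH (ltn0Sn h) (B' ^+ k).
exists (Num.max (Num.max `|B| B') R1); split; first by rewrite le_max R1_ge0 orbT.
move=> Rg; rewrite !gt_max => /andP[/andP[BRg B'Rg] R1Rg].
have Rg_gt0 := le_lt_trans (normr_ge0 B) BRg.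
have [K' [K'd K'w K'E]] := IHR1 Rg R1Rg.
exists (KCons (affine_layer Rg k A b) (KCons (@sigma_layer _ Rg k h.+1) K')).
split=> [/=|/=|x xB /=]; [lia | lia |].
have Ax_bound := affine_norm_le A b xB.
rewrite affine_layerE // => [|i]; last first.
  by rewrite (le_lt_trans (xB i)) // (le_lt_trans (ler_norm B)).
rewrite sigma_layerE // => [|j]; last first.
  exact: le_lt_trans (ler_norm _) (le_lt_trans (Ax_bound j) B'Rg).
by apply: K'E => j; rewrite mxE sigmak_norm_le.
Qed.

End MlpToKan.

Theorem mainTheorem4 (R : realType) (d : nat) (Omega : set 'rV[R]_d)
  (k W L : nat) (f : 'rV[R]_d -> R) :
  open Omega -> connected Omega -> Omega !=set0 -> bounded_set Omega ->
  (1 <= k)%N -> (1 <= W)%N -> (1 <= L)%N ->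
  (exists N : mlp R d 1,
      [/\ mlp_depth N = L, (mlp_width N <= W)%N &
          forall x, f x = mlp_eval k N x 0 0]) ->
  exists (Rg : R) (N : kan R 2 k d 1),
    [/\ 0 < Rg, (kan_depth N <= 2 * L)%N, (kan_width N <= W)%N &
        forall x, Omega x -> kan_eval Rg N x 0 0 = f x].
Proof.
move=> _ _ _ /bounded_set_coord[B OmegaB] k_gt0 W_gt0 _ [N [<- NW fE]].
case: d Omega f N OmegaB fE NW => [|d] Omega f N OmegaB fE NW.
  have [K [Kd Kw KE]] := const_kan ltr01 k_gt0 0 (mlp_eval k N 0).
  exists 1, K; split=> [//|||x _]; first by rewrite Kd; have := mlp_depth_gt0 N; lia.
  - by rewrite Kw.
  - by rewrite KE fE (thinmx0 x).
have [R0 [R0_ge0 KN]] := mlp_kan_on_box k_gt0 N (ltn0Sn d) B.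
have R0_lt : R0 < R0 + 1 by rewrite ltrDl.
have [K [Kd Kw KE]] := KN (R0 + 1) R0_lt.
exists (R0 + 1), K; split=> [|||x Ox]; first exact: le_lt_trans R0_ge0 R0_lt.
- by rewrite ltnW.
- by rewrite (leq_trans Kw) // geq_max NW.
- by rewrite KE ?fE // => i; apply: OmegaB.
Qed.
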